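(* For every real $D>1$ there exist $\alpha,\beta\in(0,\infty]$ with $\alpha\ne\beta$, and finite order SISO deterministic programs $C_1$ and $C_2$ with uniformly distributed secret input, such that $$\lim_{N\to\infty}\frac{IL_\alpha(C_1,N)}{IL_\alpha(C_2,N)}>D\quad\text{and}\quad\lim_{N\to\infty}\frac{IL_\beta(C_1,N)}{IL_\beta(C_2,N)}<\frac1D.$$ In particular, both limits exist.
   Context: A SISO deterministic program $C$ is a family indexed by $N\in\mathbb{N}^+$: for each $N$, a random variable $A$ uniformly distributed on $\mathcal{A}_N=\{0,1,\dots,N-1\}$, and a surjective map $F_N$ from $\mathcal{A}_N$ onto a finite set $\mathcal{O}_N$. The output is $O=F_N(A)$, and $\mathbf{p}_N$ denotes its distribution vector, so $\mathbf{p}_N(o)=|F_N^{-1}(o)|/N$. $C$ is of finite order if $\sup_N\|\mathbf{p}_N\|_0<\infty$, where $\|\mathbf{p}\|_0$ is the number of nonzero entries of $\mathbf{p}$. For a probability vector $\mathbf{p}$ and $\alpha\in(0,\infty]$, the Rényi entropy is $H_\alpha(\mathbf{p})=\frac{1}{1-\alpha}\log\sum_i p_i^\alpha$ for $\alpha\notin\{1,\infty\}$. The limiting cases are $H_1(\mathbf{p})=-\sum_i p_i\log p_i$ and $H_\infty(\mathbf{p})=-\log\max_i p_i$. The $\alpha$-information leakage is $IL_\alpha(C,N)=H_\alpha(\mathbf{p}_N)$. Both programs are evaluated at the same $N$. *)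

From Stdlib Require Import Reals List Arith.
From Coquelicot Require Import Coquelicot.
Import ListNotations.
Open Scope R_scope.

(* A SISO deterministic program: for each N, the map F_N : {0,..,N-1} -> outputs.
   Outputs are encoded as natural numbers; the output set O_N is taken to be the
   image of F_N on {0,..,N-1}, so F_N is surjective onto O_N by construction.
   Values of [F N a] for a >= N, and the index N = 0, are irrelevant. *)
Definition program := nat -> nat -> nat.

Definition outputs (F : program) (N : nat) : list nat :=
  nodup Nat.eq_dec (map (F N) (seq 0 N)).

Definition preimage_card (F : program) (N o : nat) : nat :=
  length (filter (fun a => Nat.eqb (F N a) o) (seq 0 N)).

Definition distr (F : program) (N : nat) : list R :=
  map (fun o => INR (preimage_card F N o) / INR N) (outputs F N).

Definition finite_order (F : program) : Prop :=
  exists K : nat, forall N : nat, (1 <= N)%nat -> (length (filter (fun x => if Req_EM_T x 0 then false else true) (distr F N)) <= K)%nat.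

Definition renyi (alpha : Rbar) (ps : list R) : R :=
  match alpha with
  | p_infty => - ln (fold_right Rmax 0 ps)
  | Finite a =>
      if Req_EM_T a 1 then - fold_right Rplus 0 (map (fun p => p * ln p) ps)
      else / (1 - a) * ln (fold_right Rplus 0 (map (fun p => Rpower p a) ps))
  | m_infty => 0 (* excluded: alpha must lie in (0, +oo] *)
  end.

Definition IL (alpha : Rbar) (F : program) (N : nat) : R := renyi alpha (distr F N).

Definition valid_order (alpha : Rbar) : Prop := Rbar_lt (Finite 0) alpha.

From Stdlib Require Import Reals List Arith Lia Lra Permutation.
From Coquelicot Require Import Coquelicot.
Import ListNotations.
Open Scope R_scope.

(* Take alpha = oo and beta = 1.  The parity of the secret leaks ln 2 in the
   limit for both orders.  The second program reduces the secret modulo T L and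
   reveals the residue when it is below L, a fixed cap otherwise: L light
   outputs of probability 1/(T L) and one heavy output of probability 1 - 1/T.
   Its min-entropy ln (T / (T - 1)) <= 1 / (T - 1) is small for T large, while
   its Shannon entropy is at least ln L / T, large once L > exp (T D).  Both
   limits exist because the output frequencies of a program periodic in the
   secret converge to their frequencies over one period, and H_1, H_oo are
   continuous at distributions with positive entries. *)

Lemma fold_right_Permutation {A B} (f : A -> B -> B) (z : B) (l l' : list A) :
  (forall x y w, f x (f y w) = f y (f x w)) -> Permutation l l' ->
  fold_right f z l = fold_right f z l'.
Proof. intros Hcomm HP; induction HP; simpl; congruence. Qed.

Lemma renyi_Permutation (alpha : Rbar) (l l' : list R) :
  Permutation l l' -> renyi alpha l = renyi alpha l'.
Proof.
  intros HP. destruct alpha as [a| |]; simpl; auto.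
  - assert (Hsum : forall g : R -> R,
      fold_right Rplus 0 (map g l) = fold_right Rplus 0 (map g l')).
    { intros g. apply fold_right_Permutation; [intros; ring|now apply Permutation_map]. }
    destruct (Req_EM_T a 1); now rewrite Hsum.
  - do 2 f_equal. apply fold_right_Permutation; [|exact HP].
    intros x y w. rewrite !Rmax_assoc, (Rmax_comm x y). reflexivity.
Qed.

Lemma is_lim_seq_Rmax (u v : nat -> R) (a b : R) :
  is_lim_seq u a -> is_lim_seq v b ->
  is_lim_seq (fun n => Rmax (u n) (v n)) (Rmax a b).
Proof.
  intros Hu Hv.
  assert (E : forall x y, Rmax x y = (x + y + Rabs (x - y)) / 2).
  { intros x y. unfold Rmax, Rabs.
    destruct (Rle_dec x y), (Rcase_abs (x - y)); lra. }
  rewrite E. apply is_lim_seq_ext with (fun n => (u n + v n + Rabs (u n - v n)) / 2).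
  { intros n. now rewrite E. }
  apply is_lim_seq_mult'; [|apply is_lim_seq_const].
  apply is_lim_seq_plus'; [now apply is_lim_seq_plus'|].
  apply (is_lim_seq_abs _ (a - b)). now apply is_lim_seq_minus'.
Qed.

Lemma is_lim_seq_ln (u : nat -> R) (a : R) :
  0 < a -> is_lim_seq u a -> is_lim_seq (fun n => ln (u n)) (ln a).
Proof.
  intros Ha Hu. apply is_lim_seq_continuous; [|exact Hu].
  apply derivable_continuous_pt. exists (/ a). now apply derivable_pt_lim_ln.
Qed.

Lemma fold_right_Rmax_repeat (c m : R) (n : nat) :
  c <= m -> fold_right Rmax m (repeat c n) = m.
Proof.
  intros Hc. induction n as [|n IH]; simpl; [reflexivity|].
  rewrite IH. now apply Rmax_right.
Qed.

Lemma fold_right_Rplus_repeat (c z : R) (n : nat) :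
  fold_right Rplus z (repeat c n) = INR n * c + z.
Proof.
  induction n as [|n IH]; simpl repeat; cbn [fold_right]; [simpl; ring|].
  rewrite IH, S_INR. ring.
Qed.

Lemma fold_right_Rmax_ge (l : list R) (x : R) : In x l -> x <= fold_right Rmax 0 l.
Proof.
  induction l as [|y l IH]; simpl; [tauto|]. intros [->|Hx].
  - apply Rmax_l.
  - eapply Rle_trans; [now apply IH|apply Rmax_r].
Qed.

Section ListLimits.

Variables (A : Type) (op : R -> R -> R) (z : R).
Hypothesis op_continuous : forall (u v : nat -> R) (a b : R),
  is_lim_seq u a -> is_lim_seq v b -> is_lim_seq (fun n => op (u n) (v n)) (op a b).

Lemma is_lim_seq_fold_right (V : list A) (u : nat -> A -> R) (l : A -> R) :
  (forall o, In o V -> is_lim_seq (fun N => u N o) (l o)) ->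
  is_lim_seq (fun N => fold_right op z (map (u N) V)) (fold_right op z (map l V)).
Proof.
  induction V as [|o V IH]; intros H; simpl; [apply is_lim_seq_const|].
  apply op_continuous; [apply H; now left|].
  apply IH. intros o' Ho'. apply H. now right.
Qed.

End ListLimits.

Section RenyiContinuity.

Variables (A : Type) (V : list A) (p : nat -> A -> R) (l : A -> R).
Hypothesis p_lim : forall o, In o V -> is_lim_seq (fun N => p N o) (l o).
Hypothesis l_pos : forall o, In o V -> 0 < l o.

Lemma is_lim_seq_renyi_infty : V <> [] ->
  is_lim_seq (fun N => renyi p_infty (map (p N) V)) (renyi p_infty (map l V)).
Proof.
  intros HV. simpl. apply (is_lim_seq_opp _ (ln _)). apply is_lim_seq_ln.
  - destruct V as [|o V']; [congruence|].
    apply Rlt_le_trans with (l o); [apply l_pos; now left|].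
    apply fold_right_Rmax_ge. now left.
  - apply is_lim_seq_fold_right; [exact is_lim_seq_Rmax|exact p_lim].
Qed.

Lemma is_lim_seq_renyi_1 :
  is_lim_seq (fun N => renyi (Finite 1) (map (p N) V)) (renyi (Finite 1) (map l V)).
Proof.
  simpl. destruct (Req_EM_T 1 1) as [_|]; [|lra].
  rewrite map_map.
  apply is_lim_seq_ext with
    (fun N => - fold_right Rplus 0 (map (fun o => p N o * ln (p N o)) V)).
  { intros N. now rewrite map_map. }
  apply -> (is_lim_seq_opp
    (fun N => fold_right Rplus 0 (map (fun o => p N o * ln (p N o)) V))
    (fold_right Rplus 0 (map (fun o => l o * ln (l o)) V))).
  apply (is_lim_seq_fold_right _ Rplus 0 is_lim_seq_plus').
  intros o Ho. apply is_lim_seq_mult'; [auto|].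
  apply is_lim_seq_ln; auto.
Qed.

End RenyiContinuity.

Definition count_below (P : nat -> bool) (N : nat) : nat := length (filter P (seq 0 N)).

Lemma count_below_S (P : nat -> bool) (N : nat) :
  count_below P (S N) = (count_below P N + if P N then 1 else 0)%nat.
Proof.
  unfold count_below. rewrite seq_S, filter_app, length_app. simpl.
  now destruct (P N).
Qed.

Lemma count_below_le (P : nat -> bool) (N : nat) : (count_below P N <= N)%nat.
Proof.
  induction N as [|N IH]; [reflexivity|].
  rewrite count_below_S. destruct (P N); lia.
Qed.

Section PeriodicCount.

Variables (P : nat -> bool) (Q : nat).
Hypothesis P_periodic : forall a, P (Q + a)%nat = P a.

Lemma count_below_add_period (N : nat) :
  count_below P (Q + N) = (count_below P Q + count_below P N)%nat.
Proof.
  induction N as [|N IH]; [unfold count_below; simpl; rewrite Nat.add_0_r; lia|].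
  rewrite Nat.add_succ_r, !count_below_S, IH, P_periodic. lia.
Qed.

Lemma count_below_mul_period_add (k r : nat) :
  count_below P (Q * k + r) = (k * count_below P Q + count_below P r)%nat.
Proof.
  induction k as [|k IH]; [now rewrite Nat.mul_0_r|].
  replace (Q * S k + r)%nat with (Q + (Q * k + r))%nat by lia.
  rewrite count_below_add_period, IH. lia.
Qed.

(* With N = k Q + r, both Q * count N and count Q * N lie within Q^2 of k Q count Q. *)
Lemma count_below_period_bounds (N : nat) : (0 < Q)%nat ->
  (Q * count_below P N <= count_below P Q * N + Q * Q)%nat /\
  (count_below P Q * N <= Q * count_below P N + Q * Q)%nat.
Proof.
  intros HQ.
  rewrite (Nat.div_mod N Q) by lia.
  pose proof (Nat.mod_upper_bound N Q ltac:(lia)).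
  rewrite count_below_mul_period_add.
  pose proof (count_below_le P (N mod Q)). pose proof (count_below_le P Q).
  split; nia.
Qed.

Lemma is_lim_seq_count_below_periodic : (0 < Q)%nat ->
  is_lim_seq (fun N => INR (count_below P N) / INR N)
    (INR (count_below P Q) / INR Q).
Proof.
  intros HQ.
  set (c := INR (count_below P Q)). set (q := INR Q).
  assert (Hq : 0 < q) by (apply lt_0_INR; lia).
  assert (Hinv : is_lim_seq (fun N => q * / INR N) 0).
  { replace 0 with (q * Rbar_inv p_infty) by (simpl; ring).
    apply (is_lim_seq_scal_l _ q (Rbar_inv p_infty)).
    apply is_lim_seq_inv; [apply is_lim_seq_INR|discriminate]. }
  apply is_lim_seq_le_le_loc with (u := fun N => c / q - q * / INR N)
     (w := fun N => c / q + q * / INR N).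
  - exists 1%nat. intros N HN.
    destruct (count_below_period_bounds N HQ) as [H1 H2].
    apply le_INR in H1. apply le_INR in H2.
    rewrite !plus_INR, !mult_INR in H1, H2. fold c q in H1, H2.
    assert (0 < INR N) by (apply lt_0_INR; lia).
    set (x := INR (count_below P N)) in *.
    split; apply Rmult_le_reg_r with (q * INR N); try nra;
      field_simplify; lra.
  - replace (Finite (c / q)) with (Rbar_minus (c / q) 0) by (simpl; f_equal; ring).
    apply is_lim_seq_minus'; [apply is_lim_seq_const|exact Hinv].
  - replace (Finite (c / q)) with (Rbar_plus (c / q) 0) by (simpl; f_equal; ring).
    apply is_lim_seq_plus'; [apply is_lim_seq_const|exact Hinv].
Qed.

End PeriodicCount.

Lemma length_filter_eqb_seq (n o : nat) :
  length (filter (fun a => Nat.eqb a o) (seq 0 n)) = if Nat.ltb o n then 1%nat else 0%nat.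
Proof.
  induction n as [|n IH]; [reflexivity|].
  rewrite seq_S, filter_app, length_app, IH. simpl.
  destruct (Nat.ltb_spec o n), (Nat.eqb_spec n o), (Nat.ltb_spec o (S n)); simpl; lia.
Qed.

Definition output_prob (F : program) (N o : nat) : R := INR (preimage_card F N o) / INR N.

Definition periodic_program (g : nat -> nat) (Q : nat) : program := fun _ a => g (a mod Q).

Section PeriodicProgram.

Variables (g : nat -> nat) (Q : nat).
Hypothesis Q_pos : (0 < Q)%nat.

Lemma In_outputs_periodic (N o : nat) : (Q <= N)%nat ->
  In o (outputs (periodic_program g Q) N) <-> exists r, (r < Q)%nat /\ g r = o.
Proof.
  intros HN. unfold outputs, periodic_program.
  rewrite nodup_In, in_map_iff. split.
  - intros [a [Ha _]]. exists (a mod Q)%nat. split; [apply Nat.mod_upper_bound; lia|exact Ha].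
  - intros [r [Hr Hg]]. exists r. rewrite Nat.mod_small by exact Hr.
    split; [exact Hg|apply in_seq; lia].
Qed.

Lemma outputs_periodic_Permutation (N : nat) : (Q <= N)%nat ->
  Permutation (outputs (periodic_program g Q) N) (outputs (periodic_program g Q) Q).
Proof.
  intros HN. apply NoDup_Permutation; try apply NoDup_nodup.
  intros o. rewrite !In_outputs_periodic by lia. reflexivity.
Qed.

Lemma output_prob_periodic_pos (o : nat) :
  In o (outputs (periodic_program g Q) Q) -> 0 < output_prob (periodic_program g Q) Q o.
Proof.
  intros Ho. apply Rdiv_lt_0_compat; [|apply lt_0_INR; lia].
  apply lt_0_INR. apply In_outputs_periodic in Ho as [r [Hr Hg]]; [|lia].
  unfold preimage_card.
  assert (Hin : In r (filter (fun a => Nat.eqb (periodic_program g Q Q a) o) (seq 0 Q))).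
  { apply filter_In. unfold periodic_program. rewrite Nat.mod_small by exact Hr.
    split; [apply in_seq; lia|now apply Nat.eqb_eq]. }
  destruct (filter _ _); [destruct Hin|simpl; lia].
Qed.

Lemma is_lim_seq_output_prob_periodic (o : nat) :
  is_lim_seq (fun N => output_prob (periodic_program g Q) N o)
    (output_prob (periodic_program g Q) Q o).
Proof.
  apply (is_lim_seq_count_below_periodic (fun a => Nat.eqb (g (a mod Q)) o) Q);
    [|exact Q_pos].
  intros a. replace (Q + a)%nat with (a + 1 * Q)%nat by lia.
  now rewrite Nat.Div0.mod_add.
Qed.

Lemma is_lim_seq_IL_periodic (alpha : Rbar) : alpha = p_infty \/ alpha = Finite 1 ->
  is_lim_seq (IL alpha (periodic_program g Q)) (IL alpha (periodic_program g Q) Q).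
Proof.
  intros Halpha.
  set (F := periodic_program g Q). set (V := outputs F Q).
  apply is_lim_seq_ext_loc with (fun N => renyi alpha (map (output_prob F N) V)).
  { exists Q. intros N HN. apply renyi_Permutation, Permutation_map.
    symmetry. now apply outputs_periodic_Permutation. }
  destruct Halpha as [->| ->].
  - apply is_lim_seq_renyi_infty.
    + intros o _. apply is_lim_seq_output_prob_periodic.
    + exact output_prob_periodic_pos.
    + intros HV. apply (in_nil (a := g 0%nat)). rewrite <- HV.
      apply In_outputs_periodic; [lia|]. exists 0%nat. split; [exact Q_pos|reflexivity].
  - apply is_lim_seq_renyi_1.
    + intros o _. apply is_lim_seq_output_prob_periodic.
    + exact output_prob_periodic_pos.
Qed.

Lemma finite_order_periodic : finite_order (periodic_program g Q).
Proof.
  exists Q. intros N _.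
  eapply Nat.le_trans; [apply filter_length_le|].
  unfold distr. rewrite length_map.
  replace Q with (length (map g (seq 0 Q))) at 2 by now rewrite length_map, length_seq.
  apply NoDup_incl_length; [apply NoDup_nodup|].
  intros o Ho. unfold outputs, periodic_program in Ho.
  rewrite nodup_In, in_map_iff in Ho. destruct Ho as [a [<- _]].
  apply in_map, in_seq. pose proof (Nat.mod_upper_bound a Q). lia.
Qed.

End PeriodicProgram.

Lemma is_lim_seq_IL_ratio_periodic (alpha : Rbar) (g1 g2 : nat -> nat) (Q1 Q2 : nat) :
  (0 < Q1)%nat -> (0 < Q2)%nat -> alpha = p_infty \/ alpha = Finite 1 ->
  IL alpha (periodic_program g2 Q2) Q2 <> 0 ->
  is_lim_seq (fun N => IL alpha (periodic_program g1 Q1) N / IL alpha (periodic_program g2 Q2) N)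
    (IL alpha (periodic_program g1 Q1) Q1 / IL alpha (periodic_program g2 Q2) Q2).
Proof.
  intros HQ1 HQ2 Halpha Hnz.
  apply is_lim_seq_div'; [apply is_lim_seq_IL_periodic..|exact Hnz]; assumption.
Qed.

Definition parity : program := periodic_program (fun r => r) 2.

Lemma distr_parity : distr parity 2 = [/ 2; / 2].
Proof.
  unfold distr. replace (outputs parity 2) with [0%nat; 1%nat] by reflexivity.
  simpl. f_equal; [|f_equal]; field.
Qed.

Lemma IL_parity (alpha : Rbar) : alpha = p_infty \/ alpha = Finite 1 ->
  IL alpha parity 2 = ln 2.
Proof.
  unfold IL. rewrite distr_parity.
  intros [-> | ->]; simpl.
  - rewrite (Rmax_left (/ 2) 0), Rmax_left, ln_Rinv by lra. ring.
  - destruct (Req_EM_T 1 1) as [_|]; [|lra]. rewrite ln_Rinv by lra. field.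
Qed.

Definition capped_residue (T L : nat) : program :=
  periodic_program (fun r => Nat.min r L) (T * L).

Section CappedResidue.

Variables (T L : nat).
Hypotheses (T_ge2 : (2 <= T)%nat) (L_pos : (1 <= L)%nat).

Lemma preimage_card_capped_residue (o : nat) : (o <= L)%nat ->
  preimage_card (capped_residue T L) (T * L) o =
  if Nat.ltb o L then 1%nat else (T * L - L)%nat.
Proof.
  intros Ho. unfold preimage_card, capped_residue, periodic_program.
  replace (seq 0 (T * L)) with (seq 0 (L + (T * L - L))) by (f_equal; nia).
  rewrite seq_app, filter_app, length_app.
  rewrite (filter_ext_in _ (fun a => Nat.eqb a o) (seq 0 L)).
  2:{ intros a Ha. apply in_seq in Ha. now rewrite Nat.mod_small, Nat.min_l by nia. }
  rewrite length_filter_eqb_seq.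
  destruct (Nat.ltb_spec o L).
  - rewrite (filter_ext_in _ (fun _ => false) (seq (0 + L) _)).
    2:{ intros a Ha. apply in_seq in Ha. rewrite Nat.mod_small, Nat.min_r by nia.
        apply Nat.eqb_neq. lia. }
    now induction (seq (0 + L) (T * L - L)).
  - rewrite (filter_ext_in _ (fun _ => true) (seq (0 + L) _)).
    2:{ intros a Ha. apply in_seq in Ha. rewrite Nat.mod_small, Nat.min_r by nia.
        apply Nat.eqb_eq. lia. }
    rewrite List.filter_true, length_seq. lia.
Qed.

Lemma distr_capped_residue :
  Permutation (distr (capped_residue T L) (T * L))
    (repeat (/ (INR T * INR L)) L ++ [(INR T - 1) / INR T]).
Proof.
  unfold distr.
  apply Permutation_trans with (map (output_prob (capped_residue T L) (T * L)) (seq 0 (S L))).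
  { apply Permutation_map, NoDup_Permutation; [apply NoDup_nodup|apply seq_NoDup|].
    intros o. unfold capped_residue. rewrite In_outputs_periodic, in_seq by nia. split.
    - intros [r [_ <-]]. pose proof (Nat.le_min_r r L). lia.
    - intros Ho. exists o. split; [nia|apply Nat.min_l; lia]. }
  rewrite seq_S, map_app. apply Permutation_app; simpl.
  - replace (repeat _ L) with (repeat (/ (INR T * INR L)) (length (seq 0 L)))
      by now rewrite length_seq.
    rewrite <- map_const.
    apply Permutation_refl'. apply map_ext_in. intros o Ho. apply in_seq in Ho.
    unfold output_prob. rewrite preimage_card_capped_residue by lia.
    destruct (Nat.ltb_spec o L); [|lia]. rewrite mult_INR. simpl. field.
    split; apply not_0_INR; lia.
  - unfold output_prob. rewrite preimage_card_capped_residue by lia.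
    destruct (Nat.ltb_spec L L); [lia|].
    rewrite minus_INR, !mult_INR by nia. apply Permutation_refl'. f_equal. field.
    split; apply not_0_INR; lia.
Qed.

(* The min-entropy is that of the heavy cap alone, ln (T / (T - 1)). *)
Lemma IL_infty_capped_residue :
  IL p_infty (capped_residue T L) (T * L) = ln (1 + / (INR T - 1)).
Proof.
  assert (HT : 2 <= INR T) by (apply (le_INR 2); lia).
  assert (HL : 1 <= INR L) by (apply (le_INR 1); lia).
  unfold IL. rewrite (renyi_Permutation _ _ _ distr_capped_residue). simpl.
  rewrite fold_right_app. simpl.
  rewrite Rmax_left by (apply Rdiv_le_0_compat; lra).
  rewrite fold_right_Rmax_repeat.
  - rewrite <- ln_Rinv by (apply Rdiv_lt_0_compat; lra). f_equal. field. lra.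
  - apply Rmult_le_reg_r with (INR T * INR L); [nra|].
    field_simplify; nra.
Qed.

(* The L light outputs alone carry Shannon entropy ln (T L) / T. *)
Lemma IL_1_capped_residue_ge :
  ln (INR L) / INR T <= IL (Finite 1) (capped_residue T L) (T * L).
Proof.
  assert (HT : 2 <= INR T) by (apply (le_INR 2); lia).
  assert (HL : 1 <= INR L) by (apply (le_INR 1); lia).
  unfold IL. rewrite (renyi_Permutation _ _ _ distr_capped_residue). simpl.
  destruct (Req_EM_T 1 1) as [_|]; [|lra].
  rewrite map_app, map_repeat, fold_right_app, fold_right_Rplus_repeat. simpl.
  set (t := INR T) in *. set (l := INR L) in *.
  assert (Hcap : (t - 1) / t * ln ((t - 1) / t) <= 0).
  { assert (ln ((t - 1) / t) <= 0).
    { rewrite <- ln_1. apply ln_le; [apply Rdiv_lt_0_compat; lra|].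
      apply Rmult_le_reg_r with t; [lra|]. field_simplify; lra. }
    assert (0 <= (t - 1) / t) by (apply Rdiv_le_0_compat; lra). nra. }
  assert (Hlight : l * (/ (t * l) * ln (/ (t * l))) = - (ln t + ln l) / t).
  { rewrite ln_Rinv, ln_mult by nra. field. lra. }
  assert (0 <= ln t / t).
  { apply Rdiv_le_0_compat; [|lra]. rewrite <- ln_1. apply ln_le; lra. }
  rewrite Hlight. unfold Rdiv in *. lra.
Qed.

End CappedResidue.

Lemma ln_1_plus_bounds (x : R) : 0 < x -> 0 < ln (1 + x) <= x.
Proof.
  intros Hx. split.
  - rewrite <- ln_1. apply ln_increasing; lra.
  - rewrite <- (ln_exp x) at 2. apply ln_le; [lra|].
    apply exp_ineq1_le.
Qed.

Lemma ln_2_lt_1 : ln 2 < 1.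
Proof.
  rewrite <- (ln_exp 1). apply ln_increasing; [lra|].
  pose proof (exp_ineq1 1). lra.
Qed.

Lemma lt_ln_2_div_ln_1_plus_inv (D t : R) :
  0 < D -> 2 * D + 1 < t -> D < ln 2 / ln (1 + / (t - 1)).
Proof.
  intros HD Ht. pose proof ln_lt_2.
  destruct (ln_1_plus_bounds (/ (t - 1))) as [Hpos Hle]; [apply Rinv_0_lt_compat; lra|].
  apply Rmult_lt_reg_r with (ln (1 + / (t - 1))); [exact Hpos|].
  unfold Rdiv. rewrite Rmult_assoc, Rinv_l by lra.
  apply Rle_lt_trans with (D * / (t - 1)); [apply Rmult_le_compat_l; lra|].
  apply Rmult_lt_reg_r with (t - 1); [lra|].
  rewrite Rmult_assoc, Rinv_l by lra. nra.
Qed.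

Lemma ln_2_div_lt_inv (D h : R) : 0 < D -> D < h -> ln 2 / h < / D.
Proof.
  intros HD Hh. pose proof ln_2_lt_1. pose proof ln_lt_2.
  apply Rlt_trans with (/ h); [|apply Rinv_lt_contravar; nra].
  unfold Rdiv. rewrite <- (Rmult_1_l (/ h)) at 2.
  apply Rmult_lt_compat_r; [apply Rinv_0_lt_compat|]; lra.
Qed.

Lemma lt_ln_div_of_exp_lt (D t l : R) : 0 < t -> exp (t * D) < l -> D < ln l / t.
Proof.
  intros Ht Hl. apply Rmult_lt_reg_r with t; [exact Ht|].
  unfold Rdiv. rewrite Rmult_assoc, Rinv_l, Rmult_1_r, Rmult_comm by lra.
  rewrite <- (ln_exp (t * D)). apply ln_increasing; [apply exp_pos|exact Hl].
Qed.

Theorem lemma3 :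
  forall D : R, 1 < D ->
  exists (alpha beta : Rbar) (C1 C2 : program),
    valid_order alpha /\ valid_order beta /\ alpha <> beta /\
    finite_order C1 /\ finite_order C2 /\
    (exists la : R,
        is_lim_seq (fun N => IL alpha C1 N / IL alpha C2 N) (Finite la) /\ D < la) /\
    (exists lb : R,
        is_lim_seq (fun N => IL beta C1 N / IL beta C2 N) (Finite lb) /\ lb < / D).
Proof.
  intros D HD.
  destruct (INR_unbounded (2 * D + 2)) as [T HT].
  destruct (INR_unbounded (exp (INR T * D))) as [L HL].
  assert (HT2 : (2 <= T)%nat) by (apply (INR_le 2 T); simpl; lra).
  assert (HL1 : (1 <= L)%nat).
  { destruct L; [pose proof (exp_pos (INR T * D)); simpl in HL; lra|lia]. }
  pose proof (IL_infty_capped_residue T L HT2 HL1) as Hmin.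
  pose proof (IL_1_capped_residue_ge T L HT2 HL1) as Hshannon.
  pose proof (lt_ln_div_of_exp_lt D (INR T) (INR L) ltac:(lra) HL) as HDshannon.
  pose proof (ln_1_plus_bounds (/ (INR T - 1)) ltac:(apply Rinv_0_lt_compat; lra)).
  unfold capped_residue in Hmin, Hshannon.
  exists p_infty, (Finite 1), parity, (capped_residue T L).
  split; [exact I|]. split; [unfold valid_order; simpl; lra|]. split; [discriminate|].
  split; [apply finite_order_periodic; lia|]. split; [apply finite_order_periodic; nia|].
  split; eexists; split.
  - apply is_lim_seq_IL_ratio_periodic; auto; [nia|]. rewrite Hmin. lra.
  - rewrite IL_parity, Hmin by auto. apply lt_ln_2_div_ln_1_plus_inv; lra.
  - apply is_lim_seq_IL_ratio_periodic; auto; [nia|]. lra.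
  - rewrite IL_parity by auto. apply ln_2_div_lt_inv; lra.
Qed.
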